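(* Let $X=\{(u,v)\in\mathbb{R}^2:0<u<1,\ 0<v<1\}$ with the Euclidean topology $\tau$ and the coordinatewise partial order $\preceq$. Then: (i) $(X,\tau,\preceq)$ is a locally compact, order-connected Hausdorff topological lattice; (ii) the canonical map $x\mapsto x^\downarrow$ topologically order-embeds $(X,\tau,\preceq)$ in $(C(X),\tau_F,\subseteq)$; (iii) the map $x\mapsto x^\downarrow$ from $(X,\tau)$ to $(C^\downarrow(X),\tau_V)$ is discontinuous at every point of $X$.
   Context: A partially ordered topological space is a topological space with a partial order whose graph is closed in the product; a topological lattice is one in which all binary meets and joins exist and $\wedge,\vee:X\times X\to X$ are continuous. $x^\downarrow=\{u\in X:u\preceq x\}$, $x^\uparrow=\{u\in X:x\preceq u\}$; order-connected means $x^\uparrow\cap y^\downarrow$ is connected whenever $x\preceq y$. $C(X)$ = closed subsets of $X$, $C^\downarrow(X)=\{x^\downarrow:x\in X\}$. Fell topology $\tau_F$: generated by $\{A:A\cap O\neq\emptyset\}$ ($O$ open) and $\{A:A\cap D=\emptyset\}$ ($D$ compact). Vietoris topology $\tau_V$: generated by $\{A:A\cap O\neq\emptyset\}$ ($O$ open) and $\{A:A\cap E=\emptyset\}$ ($E$ closed). ''Topologically order-embeds'': $x\preceq y\iff x^\downarrow\subseteq y^\downarrow$ and $x\mapsto x^\downarrow$ is a homeomorphism onto $C^\downarrow(X)$ with the relative Fell topology. *)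

From HB Require Import structures.
From mathcomp Require Import all_boot all_order all_algebra.
From mathcomp Require Import all_classical all_reals all_analysis.
Set Implicit Arguments. Unset Strict Implicit. Unset Printing Implicit Defensive.
Import Order.TTheory GRing.Theory Num.Theory.
Import numFieldNormedType.Exports.
Local Open Scope classical_set_scope.
Local Open Scope ring_scope.

Section PoTop.
Context {T : topologicalType} (le : T -> T -> Prop).

Definition down_set (x : T) : set T := [set u | le u x].
Definition up_set (x : T) : set T := [set u | le x u].

Definition po_top_space : Prop :=
  [/\ (forall x, le x x),
      (forall x y, le x y -> le y x -> x = y),
      (forall x y z, le x y -> le y z -> le x z) &
      closed [set p : T * T | le p.1 p.2]].

Definition is_glb (x y m : T) : Prop :=
  le m x /\ le m y /\ forall z, le z x -> le z y -> le z m.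
Definition is_lub (x y j : T) : Prop :=
  le x j /\ le y j /\ forall z, le x z -> le y z -> le j z.

Definition topological_lattice : Prop :=
  po_top_space /\
  exists (meet join : T -> T -> T),
    [/\ (forall x y, is_glb x y (meet x y)),
        (forall x y, is_lub x y (join x y)),
        continuous (fun p : T * T => meet p.1 p.2) &
        continuous (fun p : T * T => join p.1 p.2)].

Definition order_connected : Prop :=
  forall x y, le x y -> connected (up_set x `&` down_set y).

Definition closed_sets : set (set T) := [set A | closed A].
Definition down_closed_sets : set (set T) := [set A | exists x, A = down_set x].
End PoTop.

Definition gen_open {U : Type} (S : set (set U)) (W : set U) : Prop :=
  forall a, W a -> exists (n : nat) (B : 'I_n -> set U),
    [/\ (forall i, S (B i)), (forall i, B i a) &
        (forall c, (forall i, B i c) -> W c)].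

Section Hyper.
Context {T : topologicalType}.
Definition fell_subbasis : set (set (set T)) :=
  [set W | (exists O, open O /\ W = [set A | A `&` O !=set0])
        \/ (exists D, compact D /\ W = [set A | A `&` D = set0])].
Definition vietoris_subbasis : set (set (set T)) :=
  [set W | (exists O, open O /\ W = [set A | A `&` O !=set0])
        \/ (exists E, closed E /\ W = [set A | A `&` E = set0])].
Definition fell_open := gen_open fell_subbasis.
Definition vietoris_open := gen_open vietoris_subbasis.
End Hyper.

(* f : T -> set T is a homeomorphism from T onto its image (= range f)
   equipped with the relative topology induced by the topology with open
   sets [hopen]. *)
Definition homeo_onto_range {T : topologicalType} (hopen : set (set (set T)))
  (f : T -> set T) : Prop :=
  [/\ injective f,
      (forall W, hopen W -> open (f @^-1` W)) &
      (forall U, open U -> exists W, hopen W /\ f @` U = W `&` range f)].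

(* continuity at a point of f : T -> set T into the relative topology of
   a subset C containing range f *)
Definition continuous_at_into {T : topologicalType} (hopen : set (set (set T)))
  (f : T -> set T) (x : T) : Prop :=
  forall W, hopen W -> W (f x) -> nbhs x (f @^-1` W).

Definition open_square (R : realType) : set (R * R)%type :=
  [set p | 0 < p.1 < 1 /\ 0 < p.2 < 1].

Definition Xsq (R : realType) : topologicalType := (set_type (@open_square R) : topologicalType).

Definition sq_le (R : realType) (x y : Xsq R) : Prop :=
  ((set_val x).1 <= (set_val y).1) /\ ((set_val x).2 <= (set_val y).2).

(* Clamping each coordinate is a continuous
   retraction of R x R onto an order interval [a, b], so order intervals are
   continuous images of closed rectangles: they are compact and connected, and
   those around x are neighbourhoods of x.

   Fell embedding: the points whose down-set misses a compact D form an open set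
   by the tube lemma applied to the closed order graph, and a point whose
   down-set meets an open O keeps doing so nearby, since a witness in O can be
   pushed down diagonally.  Conversely, among down-sets, those of the points of
   the box of radius d around x are cut out by meeting the open quadrant above
   x - (d, d) and missing the two points x + (d, -d) and x + (-d, d).

   Vietoris discontinuity: the closed set E = {z | x1 + z2 <= z1} misses the
   down-set of x, yet for every small d > 0 the down-set of (x1 + d, x2)
   contains the point (x1 + d, d) of E. *)

From HB Require Import structures.
From mathcomp Require Import all_boot all_order all_algebra.
From mathcomp Require Import all_classical all_reals all_analysis.
From mathcomp Require Import lra.

Import Order.TTheory GRing.Theory Num.Theory.
Import numFieldNormedType.Exports.
Local Open Scope classical_set_scope.
Local Open Scope ring_scope.

Section PairContinuous.
Context {T U : topologicalType}.

Lemma pairl_continuous (b : U) : continuous (fun t : T => (t, b)).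
Proof. by move=> t; apply: cvg_pair => //; exact: cvg_cst. Qed.

Lemma pairr_continuous (a : T) : continuous (fun s : U => (a, s)).
Proof. by move=> s; apply: cvg_pair => //; exact: cvg_cst. Qed.

Lemma continuous_fst_comp {V : topologicalType} (c : T -> V) :
  continuous c -> continuous (fun p : T * U => c p.1).
Proof. by move=> cc p; apply: continuous_comp; [exact: cvg_fst | exact: cc]. Qed.

Lemma continuous_snd_comp {V : topologicalType} (c : U -> V) :
  continuous c -> continuous (fun p : T * U => c p.2).
Proof. by move=> cc p; apply: continuous_comp; [exact: cvg_snd | exact: cc]. Qed.

End PairContinuous.

Section PartialOrderTopology.
Context {T : topologicalType} (le : T -> T -> Prop).
Hypothesis le_closed : closed [set p : T * T | le p.1 p.2].

Lemma closed_down_set x : closed (down_set le x).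
Proof.
exact: (proj1 (continuous_closedP _) (pairl_continuous (T := T) x) _ le_closed).
Qed.

Lemma near_down_set_disjoint x (D : set T) : compact D ->
  down_set le x `&` D = set0 -> \forall y \near x, down_set le y `&` D = set0.
Proof.
move=> /compact_near_coveringP cD xD.
have : \forall y \near x, D `<=` (fun d => ~ le d y).
  apply: cD => d Dd; have ndx : ~ le d x.
    by move=> dx; have : (down_set le x `&` D) d by []; rewrite xD.
  have : open_nbhs (d, x) (~` [set p : T * T | le p.1 p.2]).
    by split; [exact: closed_openC | exact: ndx].
  by move/open_nbhs_nbhs; apply: filterS => -[].
by apply: filterS => y yD; rewrite -subset0 => d [dy /yD].
Qed.

End PartialOrderTopology.

Lemma down_set_inj {T : topologicalType} (le : T -> T -> Prop) :
  (forall z, le z z) -> (forall u v, le u v -> le v u -> u = v) ->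
  injective (down_set le).
Proof.
move=> refl anti x y dxy; apply: anti.
- by have : down_set le x x := refl x; rewrite dxy.
- by have : down_set le y y := refl y; rewrite -dxy.
Qed.

Lemma down_set_disjoint1 {T : topologicalType} (le : T -> T -> Prop) x p :
  down_set le x `&` [set p] = set0 <-> ~ le p x.
Proof.
split=> [xp px|npx]; first by have : (down_set le x `&` [set p]) p by []; rewrite xp.
by rewrite -subset0 => z [zx zp]; apply: npx; rewrite -zp.
Qed.

Lemma down_set_subset {T : topologicalType} (le : T -> T -> Prop) x y :
  (forall z, le z z) -> (forall u v w, le u v -> le v w -> le u w) ->
  le x y <-> down_set le x `<=` down_set le y.
Proof. by move=> refl trans; split=> [xy z zx|]; [exact: trans xy | apply; exact: refl]. Qed.

Section SubbasisTopology.
Context {U : Type} (S : set (set U)).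

Lemma gen_open_subbasis B : S B -> gen_open S B.
Proof. by move=> SB a Ba; exists 1%N, (fun=> B); split=> // c /(_ ord0). Qed.

Lemma gen_openI A B : gen_open S A -> gen_open S B -> gen_open S (A `&` B).
Proof.
move=> oA oB a [Aa Ba].
have [n [F [SF Fa FA]]] := oA a Aa; have [m [G [SG Ga GB]]] := oB a Ba.
exists (n + m)%N, (fun i => match fintype.split i with inl j => F j | inr k => G k end).
split=> [i|i|c FGc]; try by case: fintype.split.
split; [apply: FA => j; have := FGc (unsplit (inl j)) | apply: GB => k; have := FGc (unsplit (inr k))].
  by rewrite unsplitK.
by rewrite unsplitK.
Qed.

Lemma gen_open_trace (M P : set U) : P `<=` M ->
  (forall a, P a -> exists W, [/\ gen_open S W, W a & W `&` M `<=` P]) ->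
  exists W, gen_open S W /\ P = W `&` M.
Proof.
move=> PM Ploc; exists [set c | exists V, [/\ gen_open S V, V c & V `&` M `<=` P]]; split.
  move=> a [V [oV Va VP]]; have [n [B [SB Ba BV]]] := oV a Va.
  by exists n, B; split=> // c /BV Vc; exists V.
apply/seteqP; split=> [a Pa|a [[V [_ Va VP]] Ma]]; last exact: VP.
by split; [exact: Ploc | exact: PM].
Qed.

Lemma gen_open_preimage {T : topologicalType} (f : T -> U) (W : set U) :
  (forall B x, S B -> B (f x) -> \forall y \near x, B (f y)) ->
  gen_open S W -> open (f @^-1` W).
Proof.
move=> Bnear oW; rewrite openE => x /oW [n [B [SB Bfx BW]]].
have : \forall y \near x, forall i, B i (f y).
  by apply: filter_forall => i; exact: Bnear.
by apply: filterS => y /BW.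
Qed.

End SubbasisTopology.

Lemma continuous_cluster {T U : topologicalType} (f : T -> U) p q :
  continuous f -> cluster (nbhs p) q -> cluster (nbhs (f p)) (f q).
Proof.
move=> cf pq A B /cf fA /cf fB; have [z [Az Bz]] := pq _ _ fA fB.
by exists (f z).
Qed.

Lemma connected_setX {T U : topologicalType} (A : set T) (B : set U) :
  connected A -> connected B -> connected (A `*` B).
Proof.
move=> cA cB.
have [->|/set0P[a0 Aa0]] := eqVneq A set0; first by rewrite set0X; exact: connected0.
have [->|/set0P[b0 Bb0]] := eqVneq B set0; first by rewrite setX0; exact: connected0.
have -> : A `*` B = \bigcup_(a in A) ((fun t => (t, b0)) @` A `|` (fun s => (a, s)) @` B).
  apply/seteqP; split=> [[a b] [/= Aa Bb]|p [a Aa [[t At <-]|[s Bs <-]]]] //.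
  by exists a => //; right; exists b.
apply: bigcup_connected => [|a Aa].
  by exists (a0, b0) => a _; left; exists a0.
apply: connectedU; first by exists (a, b0); split; [exists a | exists b0].
- apply: connected_continuous_connected => //.
  exact/continuous_subspaceT/pairl_continuous.
- apply: connected_continuous_connected => //.
  exact/continuous_subspaceT/pairr_continuous.
Qed.

Lemma closed_le_continuous {R : realType} {T : topologicalType} (f g : T -> R) :
  continuous f -> continuous g -> closed [set t | f t <= g t].
Proof.
move=> cf cg; rewrite (_ : [set t | _] = (g - f) @^-1` [set r | 0 <= r]).
  have cgf : continuous (g - f) by move=> t; exact: cvgB (cg t) (cf t).
  exact: (proj1 (continuous_closedP _) cgf _ (@closed_ge R 0)).
by apply/seteqP; split=> t /=; rewrite subr_ge0.
Qed.

Section UnitInterval.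
Context {R : realType}.
Implicit Types a b t lo hi : R.

Lemma min_in01 {a b} : 0 < a < 1 -> 0 < b < 1 -> 0 < Num.min a b < 1.
Proof. by move=> /andP[a0 a1] /andP[b0 b1]; rewrite lt_min gt_min a0 b0 a1. Qed.

Lemma max_in01 {a b} : 0 < a < 1 -> 0 < b < 1 -> 0 < Num.max a b < 1.
Proof. by move=> /andP[a0 a1] /andP[b0 b1]; rewrite lt_max gt_max a0 a1 b1. Qed.

Definition clamp lo hi t := Num.max lo (Num.min hi t).

Lemma clamp_id lo hi t : lo <= t <= hi -> clamp lo hi t = t.
Proof. by move=> /andP[lot thi]; rewrite /clamp min_r // max_r. Qed.

Lemma clamp_itv {lo hi} t : lo <= hi -> lo <= clamp lo hi t <= hi.
Proof. by move=> lohi; rewrite /clamp le_max lexx ge_max lohi ge_min lexx. Qed.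

Lemma clamp_in01 {lo hi} t : 0 < lo < 1 -> 0 < hi < 1 -> 0 < clamp lo hi t < 1.
Proof. by move=> /andP[lo0 lo1] /andP[hi0 hi1]; rewrite /clamp lt_max gt_max gt_min lo0 lo1 hi1. Qed.

Lemma clamp_continuous lo hi : continuous (clamp lo hi).
Proof.
apply: max_fun_continuous => [t|]; first exact: cvg_cst.
by apply: min_fun_continuous => t; [exact: cvg_cst | exact: cvg_id].
Qed.

End UnitInterval.

Section OpenSquare.
Variable R : realType.
Implicit Types x y z : Xsq R.

Definition coord1 x : R := (set_val x).1.
Definition coord2 x : R := (set_val x).2.

Lemma coord_bounds x : 0 < coord1 x < 1 /\ 0 < coord2 x < 1.
Proof. by case: x => p hp; exact: set_mem hp. Qed.

Lemma sq_ext x y : coord1 x = coord1 y -> coord2 x = coord2 y -> x = y.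
Proof.
case: x => [[a b] ?]; case: y => [[a' b'] ?]; rewrite /coord1 /coord2 /= => ea eb.
by apply: val_inj; rewrite /= ea eb.
Qed.

Definition sq_pt {a b : R} (ha : 0 < a < 1) (hb : 0 < b < 1) : Xsq R :=
  exist _ (a, b) (mem_set (conj ha hb : open_square (a, b))).

Lemma coord1_sq_pt a b (ha : 0 < a < 1) (hb : 0 < b < 1) : coord1 (sq_pt ha hb) = a.
Proof. by []. Qed.

Lemma coord2_sq_pt a b (ha : 0 < a < 1) (hb : 0 < b < 1) : coord2 (sq_pt ha hb) = b.
Proof. by []. Qed.

Lemma sq_le_coord x y : sq_le x y <-> coord1 x <= coord1 y /\ coord2 x <= coord2 y.
Proof. by []. Qed.

Lemma coord1_continuous : continuous coord1.
Proof. by move=> x; apply: continuous_comp; [exact: initial_continuous | exact: cvg_fst]. Qed.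

Lemma coord2_continuous : continuous coord2.
Proof. by move=> x; apply: continuous_comp; [exact: initial_continuous | exact: cvg_snd]. Qed.

Lemma sq_continuous {T : topologicalType} (f : T -> Xsq R) :
  continuous (coord1 \o f) -> continuous (coord2 \o f) -> continuous f.
Proof.
move=> c1f c2f; apply: continuous_comp_initial => t.
rewrite (_ : _ \o f = fun t => (coord1 (f t), coord2 (f t))).
  exact: cvg_pair (c1f t) (c2f t).
by apply/funext => s /=; rewrite -surjective_pairing.
Qed.

Lemma ball_sq x e y : ball x e y <->
  (coord1 x - e < coord1 y < coord1 x + e) /\ (coord2 x - e < coord2 y < coord2 x + e).
Proof.
have ballR (a b : R) : ball a e b <-> a - e < b < a + e by rewrite /ball /= ltr_distlC.
by rewrite -!ballR.
Qed.

Lemma sq_margin x e : 0 < e ->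
  exists d, [/\ 0 < d, d < e, d < coord1 x < 1 - d & d < coord2 x < 1 - d].
Proof.
move=> e0; have [/andP[x10 x11] /andP[x20 x21]] := coord_bounds x.
have below (a : R) : 0 < a -> \forall d \near 0^'+, d < a by exact: nbhs_right_lt.
near (0 : R)^'+ => d.
have d0 : 0 < d by near: d; exact: nbhs_right_gt.
have [? ? ? ? ?] : [/\ d < e, d < coord1 x, d < 1 - coord1 x, d < coord2 x & d < 1 - coord2 x].
  by split; near: d; apply: below; rewrite ?subr_gt0.
by exists d; split=> //; apply/andP; split; lra.
Unshelve. all: by end_near.
Qed.

Lemma sq_le_closed : closed [set p : Xsq R * Xsq R | sq_le p.1 p.2].
Proof.
by apply: closedI; apply: closed_le_continuous;
  [exact: continuous_fst_comp coord1_continuous | exact: continuous_snd_comp coord1_continuous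
  |exact: continuous_fst_comp coord2_continuous | exact: continuous_snd_comp coord2_continuous].
Qed.

Lemma sq_po_top_space : po_top_space (@sq_le R).
Proof.
split=> [x|x y [? ?] [? ?]|x y z [? ?] [? ?]|]; last exact: sq_le_closed.
- by split.
- by apply: sq_ext; apply/eqP; rewrite eq_le; apply/andP.
- by split; apply: le_trans; eassumption.
Qed.

Lemma sq_hausdorff : hausdorff_space (Xsq R).
Proof.
move=> p q pq; apply: sq_ext; apply: Rhausdorff.
- exact: continuous_cluster coord1_continuous pq.
- exact: continuous_cluster coord2_continuous pq.
Qed.

Definition sq_meet x y : Xsq R :=
  sq_pt (min_in01 (proj1 (coord_bounds x)) (proj1 (coord_bounds y)))
        (min_in01 (proj2 (coord_bounds x)) (proj2 (coord_bounds y))).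

Definition sq_join x y : Xsq R :=
  sq_pt (max_in01 (proj1 (coord_bounds x)) (proj1 (coord_bounds y)))
        (max_in01 (proj2 (coord_bounds x)) (proj2 (coord_bounds y))).

Lemma sq_meet_glb x y : is_glb (@sq_le R) x y (sq_meet x y).
Proof.
split; [|split].
- by split; rewrite /= ge_min lexx.
- by split; rewrite /= ge_min lexx orbT.
- by move=> z [? ?] [? ?]; split; rewrite /= le_min; apply/andP.
Qed.

Lemma sq_join_lub x y : is_lub (@sq_le R) x y (sq_join x y).
Proof.
split; [|split].
- by split; rewrite /= le_max lexx.
- by split; rewrite /= le_max lexx orbT.
- by move=> z [? ?] [? ?]; split; rewrite /= ge_max; apply/andP.
Qed.

Lemma sq_topological_lattice : topological_lattice (@sq_le R).
Proof.
split; first exact: sq_po_top_space.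
exists sq_meet, sq_join; split; [exact: sq_meet_glb | exact: sq_join_lub | |];
  apply: sq_continuous; [apply: min_fun_continuous | apply: min_fun_continuous
                        | apply: max_fun_continuous | apply: max_fun_continuous];
  by [exact: continuous_fst_comp coord1_continuous | exact: continuous_snd_comp coord1_continuous
     | exact: continuous_fst_comp coord2_continuous | exact: continuous_snd_comp coord2_continuous].
Qed.

Definition sq_clamp a b (p : R * R) : Xsq R :=
  sq_pt (clamp_in01 p.1 (proj1 (coord_bounds a)) (proj1 (coord_bounds b)))
        (clamp_in01 p.2 (proj2 (coord_bounds a)) (proj2 (coord_bounds b))).

Lemma sq_clamp_continuous a b : continuous (sq_clamp a b).
Proof.
by apply: sq_continuous;
  [exact: continuous_fst_comp (clamp_continuous (coord1 a) (coord1 b))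
  |exact: continuous_snd_comp (clamp_continuous (coord2 a) (coord2 b))].
Qed.

Lemma sq_interval_image a b : sq_le a b ->
  up_set (@sq_le R) a `&` down_set (@sq_le R) b =
  sq_clamp a b @` (`[coord1 a, coord1 b] `*` `[coord2 a, coord2 b]).
Proof.
move=> [ab1 ab2]; apply/seteqP; split=> [z [[az1 az2] [zb1 zb2]]|_ [p _ <-]].
  exists (coord1 z, coord2 z); first by split; rewrite /= in_itv /=; apply/andP.
  by apply: sq_ext; apply: clamp_id; apply/andP.
by have /andP[? ?] := clamp_itv p.1 ab1; have /andP[? ?] := clamp_itv p.2 ab2.
Qed.

Lemma sq_interval_compact a b : sq_le a b ->
  compact (up_set (@sq_le R) a `&` down_set (@sq_le R) b).
Proof.
move/sq_interval_image => ->; apply: continuous_compact.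
  exact/continuous_subspaceT/sq_clamp_continuous.
by apply: compact_setX; exact: segment_compact.
Qed.

Lemma sq_order_connected : order_connected (@sq_le R).
Proof.
move=> a b /sq_interval_image ->; apply: connected_continuous_connected.
  by apply: connected_setX; exact: segment_connected.
exact/continuous_subspaceT/sq_clamp_continuous.
Qed.

Lemma sq_locally_compact : locally_compact [set: Xsq R].
Proof.
move=> x _; have [d [d0 _ /andP[? ?] /andP[? ?]]] := sq_margin x 1 ltr01.
have lo1 : 0 < coord1 x - d < 1 by apply/andP; split; lra.
have lo2 : 0 < coord2 x - d < 1 by apply/andP; split; lra.
have hi1 : 0 < coord1 x + d < 1 by apply/andP; split; lra.
have hi2 : 0 < coord2 x + d < 1 by apply/andP; split; lra.
have lohi : sq_le (sq_pt lo1 lo2) (sq_pt hi1 hi2) by split=> /=; lra.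
exists (up_set (@sq_le R) (sq_pt lo1 lo2) `&` down_set (@sq_le R) (sq_pt hi1 hi2)).
  apply: filterS (nbhsx_ballx x _ d0) => y /ball_sq [/andP[? ?] /andP[? ?]] _.
  by split; split=> /=; lra.
by split; [|apply: compact_closed sq_hausdorff _]; exact: sq_interval_compact.
Qed.

Lemma sq_near_down_set_meets x (O : set (Xsq R)) : open O ->
  down_set (@sq_le R) x `&` O !=set0 ->
  \forall y \near x, down_set (@sq_le R) y `&` O !=set0.
Proof.
move=> oO [z [[zx1 zx2] Oz]].
have /nbhs_ballP [e e0 zeO] : nbhs z O by exact: open_nbhs_nbhs.
have [d [d0 de /andP[? ?] /andP[? ?]]] := sq_margin z e e0.
have w1 : 0 < coord1 z - d < 1 by apply/andP; split; lra.
have w2 : 0 < coord2 z - d < 1 by apply/andP; split; lra.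
have Ow : O (sq_pt w1 w2).
  by apply: zeO; apply/ball_sq; rewrite coord1_sq_pt coord2_sq_pt; split; apply/andP; split; lra.
apply/nbhs_ballP; exists d => // y /ball_sq [/andP[? ?] /andP[? ?]].
by exists (sq_pt w1 w2); split=> //; split=> /=; lra.
Qed.

Lemma sq_down_set_fell_preimage W :
  fell_open W -> open (down_set (@sq_le R) @^-1` W).
Proof.
apply: gen_open_preimage => B x; case=> [[V [oV ->]]|[D [cD ->]]].
  exact: sq_near_down_set_meets.
exact: near_down_set_disjoint sq_le_closed x D cD.
Qed.

Lemma sq_down_set_fell_image U : open U ->
  exists W, fell_open W /\ down_set (@sq_le R) @` U = W `&` range (down_set (@sq_le R)).
Proof.
move=> oU; apply: gen_open_trace; first by move=> _ [x _ <-]; exists x.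
move=> _ [x Ux <-].
have /nbhs_ballP [e e0 xeU] : nbhs x U by exact: open_nbhs_nbhs.
have [d [d0 de /andP[? ?] /andP[? ?]]] := sq_margin x e e0.
have l1 : 0 < coord1 x - d < 1 by apply/andP; split; lra.
have l2 : 0 < coord2 x - d < 1 by apply/andP; split; lra.
have u1 : 0 < coord1 x + d < 1 by apply/andP; split; lra.
have u2 : 0 < coord2 x + d < 1 by apply/andP; split; lra.
pose V := [set z : Xsq R | coord1 x - d < coord1 z /\ coord2 x - d < coord2 z].
have oV : open V.
  apply: openI.
    exact: (proj1 (continuousP _) coord1_continuous _ (@open_gt R _)).
  exact: (proj1 (continuousP _) coord2_continuous _ (@open_gt R _)).
exists ([set A | A `&` V !=set0] `&` [set A | A `&` [set sq_pt u1 l2] = set0]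
          `&` [set A | A `&` [set sq_pt l1 u2] = set0]); split.
- apply: gen_openI; first apply: gen_openI; apply: gen_open_subbasis.
  + by left; exists V.
  + by right; exists [set sq_pt u1 l2]; split=> //; exact: compact_set1.
  + by right; exists [set sq_pt l1 u2]; split=> //; exact: compact_set1.
- split; [split|].
  + by exists x; split; [split | split; lra].
  + by apply/down_set_disjoint1 => /sq_le_coord; rewrite coord1_sq_pt => -[? _]; lra.
  + by apply/down_set_disjoint1 => /sq_le_coord; rewrite coord2_sq_pt => -[_ ?]; lra.
move=> A [WA [y _ yA]]; rewrite -yA in WA *.
move: WA => [[[z [[zy1 zy2] [Vz1 Vz2]]] /down_set_disjoint1 yp1] /down_set_disjoint1 yp2].
exists y => //; apply: xeU; apply/ball_sq.
have y1 : coord1 y < coord1 x + d.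
  rewrite ltNge; apply/negP => p1y; apply: yp1; apply/sq_le_coord.
  by rewrite coord1_sq_pt coord2_sq_pt; split; lra.
have y2 : coord2 y < coord2 x + d.
  rewrite ltNge; apply/negP => p2y; apply: yp2; apply/sq_le_coord.
  by rewrite coord1_sq_pt coord2_sq_pt; split; lra.
by split; apply/andP; split; lra.
Qed.

Lemma sq_down_set_vietoris_discontinuous x :
  ~ continuous_at_into vietoris_open (down_set (@sq_le R)) x.
Proof.
move=> cx; pose E := [set z : Xsq R | coord1 x + coord2 z <= coord1 z].
have cE : closed E.
  apply: closed_le_continuous; last exact: coord1_continuous.
  by move=> z; exact: cvgD (cvg_cst _) (coord2_continuous z).
have xE : down_set (@sq_le R) x `&` E = set0.
  rewrite -subset0 => z [/sq_le_coord [? _] /=]; rewrite /E /=.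
  by have [_ /andP[? _]] := coord_bounds z; lra.
have oW : vietoris_open [set A : set (Xsq R) | A `&` E = set0].
  by apply: gen_open_subbasis; right; exists E.
have /nbhs_ballP [e e0 xeW] := cx _ oW xE.
have [d [d0 de /andP[? ?] /andP[? ?]]] := sq_margin x e e0.
have y1 : 0 < coord1 x + d < 1 by apply/andP; split; lra.
have z2 : 0 < d < 1 by apply/andP; split; lra.
have yW : down_set (@sq_le R) (sq_pt y1 (proj2 (coord_bounds x))) `&` E = set0.
  by apply: xeW; apply/ball_sq; rewrite coord1_sq_pt coord2_sq_pt; split; apply/andP; split; lra.
suff : (down_set (@sq_le R) (sq_pt y1 (proj2 (coord_bounds x))) `&` E) (sq_pt y1 z2) by rewrite yW.
by split; [apply/sq_le_coord; rewrite !coord1_sq_pt !coord2_sq_pt; split; lra | exact: lexx].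
Qed.

End OpenSquare.

Theorem mainTheorem10 (R : realType) :
  [/\ locally_compact [set: Xsq R],
      order_connected (@sq_le R),
      hausdorff_space (Xsq R) &
      topological_lattice (@sq_le R)]
  /\
  ((forall x : Xsq R, closed_sets (down_set (@sq_le R) x)) /\
   (forall x y : Xsq R, sq_le x y <-> down_set (@sq_le R) x `<=` down_set (@sq_le R) y) /\
   homeo_onto_range fell_open (down_set (@sq_le R)))
  /\
  (forall x : Xsq R, ~ continuous_at_into vietoris_open (down_set (@sq_le R)) x).
Proof.
have [refl anti trans le_closed] := sq_po_top_space R.
split; first split.
- exact: sq_locally_compact.
- exact: sq_order_connected.
- exact: sq_hausdorff.
- exact: sq_topological_lattice.
split; [split; [|split]|].
- exact: closed_down_set le_closed.
- by move=> x y; exact: down_set_subset refl trans.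
- split; [exact: down_set_inj refl anti | exact: sq_down_set_fell_preimage | exact: sq_down_set_fell_image].
- exact: sq_down_set_vietoris_discontinuous.
Qed.
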